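(* Let $0<m\le L$ and let $(\alpha,\beta,\gamma)$ be constant parameters. Define $a(\lambda)=\beta-\gamma\alpha\lambda$ and $b(\lambda)=(1+\gamma)\alpha\lambda-(1+\beta)$. The two-step momentum algorithm is stable for all $f\in\mathcal{Q}_m^L$ if and only if (1) $(b(\lambda),a(\lambda))\in\Delta$ for all $\lambda\in[m,L]$, equivalently (2) $(b(\lambda),a(\lambda))\in\Delta$ for $\lambda\in\{m,L\}$. Furthermore, for $\rho\in(0,1)$, the linear convergence rate $\rho$ is achieved for all $f\in\mathcal{Q}_m^L$ if and only if (1) $(b(\lambda),a(\lambda))\in\Delta_\rho$ for all $\lambda\in[m,L]$, equivalently (2) $(b(\lambda),a(\lambda))\in\Delta_\rho$ for $\lambda\in\{m,L\}$. Here $\Delta=\{(b,a):|b|-1<a<1\}$ and $\Delta_\rho=\{(b,a):\rho(|b|-\rho)\le a\le\rho^2\}$.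
   Context: $\mathcal{Q}_m^L$ is the class of quadratic functions $f(x)=\tfrac12x^TQx-q^Tx$ on $\mathbb{R}^n$ with $q\in\mathbb{R}^n$, $Q=Q^T\succ0$ whose largest eigenvalue is $L$ and smallest is $m$; $x^\star$ is the minimizer. The (noiseless) two-step momentum algorithm is $x^{t+2}=x^{t+1}+\beta(x^{t+1}-x^t)-\alpha\nabla f\big(x^{t+1}+\gamma(x^{t+1}-x^t)\big)$; with $\psi^t=[(x^t-x^\star)^T,(x^{t+1}-x^\star)^T]^T$, $\psi^{t+1}=A\psi^t$, $A=\begin{bmatrix}0&I\\-\beta I+\gamma\alpha Q&(1+\beta)I-(1+\gamma)\alpha Q\end{bmatrix}$. The algorithm is stable for all $f\in\mathcal{Q}_m^L$ if the spectral radius of $A$ is less than $1$ for every $f\in\mathcal{Q}_m^L$; it achieves linear convergence rate $\rho$ for all $f\in\mathcal{Q}_m^L$ if the spectral radius of $A$ is at most $\rho$ for every $f\in\mathcal{Q}_m^L$. *)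

From HB Require Import structures.
From mathcomp Require Import all_boot all_order all_algebra.
From mathcomp Require Import complex.
Set Implicit Arguments. Unset Strict Implicit. Unset Printing Implicit Defensive.
Import Order.TTheory GRing.Theory Num.Theory.
Local Open Scope ring_scope.
Local Open Scope complex_scope.

Section Defs.
Variable R : rcfType.

Definition in_QmL (n : nat) (m L : R) (Q : 'M[R]_n) : Prop :=
  [/\ Q^T = Q,
      (forall x : 'rV[R]_n, x != 0 -> 0 < (x *m Q *m x^T) ord0 ord0),
      eigenvalue Q m, eigenvalue Q L &
      (forall a, eigenvalue Q a -> m <= a <= L)].

Definition momA (n : nat) (alpha beta gamma : R) (Q : 'M[R]_n) : 'M[R]_(n + n) :=
  block_mx 0 1%:M
           (- beta%:M + (gamma * alpha) *: Q)
           ((1 + beta)%:M - ((1 + gamma) * alpha) *: Q).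

Definition eigvalC (k : nat) (A : 'M[R]_k) (z : R[i]) : Prop :=
  root (char_poly (map_mx (fun x : R => x%:C) A)) z.

Definition spec_rad_lt (k : nat) (A : 'M[R]_k) (r : R) : Prop :=
  forall z, eigvalC A z -> `|z| < r%:C.
Definition spec_rad_le (k : nat) (A : 'M[R]_k) (r : R) : Prop :=
  forall z, eigvalC A z -> `|z| <= r%:C.

Definition stable_all (n : nat) (m L alpha beta gamma : R) : Prop :=
  forall Q : 'M[R]_n, in_QmL m L Q -> spec_rad_lt (momA alpha beta gamma Q) 1.
Definition rate_all (n : nat) (m L alpha beta gamma rho : R) : Prop :=
  forall Q : 'M[R]_n, in_QmL m L Q -> spec_rad_le (momA alpha beta gamma Q) rho.

Definition a_fun (alpha beta gamma lam : R) : R := beta - gamma * alpha * lam.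
Definition b_fun (alpha beta gamma lam : R) : R :=
  (1 + gamma) * alpha * lam - (1 + beta).

Definition in_Delta (b a : R) : Prop := `|b| - 1 < a < 1.
Definition in_Delta_rho (rho b a : R) : Prop := rho * (`|b| - rho) <= a <= rho ^+ 2.

End Defs.

From HB Require Import structures.
From mathcomp Require Import all_boot all_order all_algebra.
From mathcomp Require Import complex ring lra.
Set Implicit Arguments. Unset Strict Implicit. Unset Printing Implicit Defensive.
Import Order.TTheory GRing.Theory Num.Theory.
Local Open Scope ring_scope.

(* Eliminating x from the block equations of an eigenvector (x, y) of A shows
   that z is an eigenvalue of A iff y (s(z) + t(z) Q) = 0 for some y != 0,
   where z^2 + b(lam) z + a(lam) = s(z) + lam t(z).  As Q is real symmetric,
   -s(z)/t(z) is then a real eigenvalue of Q (if t(z) = 0 then s(z) = 0 and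
   any eigenvalue will do), so the spectrum of A is the set of roots of
   z^2 + b(lam) z + a(lam) for lam in the spectrum of Q.  Both roots of a real
   monic quadratic lie in the open unit disc (resp. the closed disc of radius
   rho) iff (b, a) is in Delta (resp. Delta_rho): for real roots this is the
   sign of the quadratic at +-1 (resp. +-rho) plus a bound on the product of
   the roots, for a conjugate pair both moduli equal sqrt a.  Delta and
   Delta_rho are intersections of three half-planes and lam |-> (b, a)(lam) is
   affine, so the conditions on [m, L] reduce to the endpoints; a diagonal Q
   with spectrum {m, L} shows that they are necessary. *)

Section QuadraticRegions.
Variable R : rcfType.
Implicit Types (a b r : R).

Lemma in_DeltaE b a :
  in_Delta b a <-> [/\ 0 < 1 + b + a, 0 < 1 - b + a & a < 1].
Proof.
rewrite /in_Delta ltrBlDr ltr_norml; split.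
  by case/andP=> /andP[? ?] ?; split; lra.
by case=> ? ? ?; apply/andP; split; [apply/andP; split|]; lra.
Qed.

Lemma in_Delta_rhoE r b a : 0 <= r ->
  in_Delta_rho r b a <-> [/\ 0 <= r ^+ 2 + r * b + a, 0 <= r ^+ 2 - r * b + a & a <= r ^+ 2].
Proof.
move=> r0; rewrite /in_Delta_rho mulrBr -expr2 lerBlDr.
have -> : (r * `|b| <= a + r ^+ 2) = (`|r * b| <= a + r ^+ 2) by rewrite normrM ger0_norm.
rewrite ler_norml; split.
  by case/andP=> /andP[? ?] ?; split; nra.
by case=> ? ? ?; apply/andP; split; [apply/andP; split|]; nra.
Qed.

Lemma vieta_lt_bound r (u v : R) : 0 <= r ->
  0 < (r - u) * (r - v) -> u * v < r ^+ 2 -> u < r.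
Proof.
move=> r0 h1 h2; rewrite ltNge; apply/negP => ru.
have rv : r < v by rewrite ltNge; apply/negP => vr; nra.
nra.
Qed.

Lemma vieta_le_bound r (u v : R) : 0 < r ->
  0 <= (r - u) * (r - v) -> u * v <= r ^+ 2 -> u <= r.
Proof.
move=> r0 h1 h2; rewrite leNgt; apply/negP => ru.
have rv : r <= v by rewrite leNgt; apply/negP => vr; nra.
nra.
Qed.

Lemma in_Delta_real_roots (x1 x2 : R) :
  in_Delta (- (x1 + x2)) (x1 * x2) <-> `|x1| < 1 /\ `|x2| < 1.
Proof.
rewrite in_DeltaE !ltr_norml.
have -> : 1 + - (x1 + x2) + x1 * x2 = (1 - x1) * (1 - x2) by ring.
have -> : 1 - - (x1 + x2) + x1 * x2 = (1 + x1) * (1 + x2) by ring.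
split; last by case=> /andP[? ?] /andP[? ?]; split; nra.
case=> h1 h2 h3; have := @vieta_lt_bound 1 _ _ ler01; rewrite expr1n => bound.
split; apply/andP; split.
- by rewrite ltrNl; apply: (bound _ (- x2)); rewrite ?opprK ?mulrNN.
- exact: (bound _ x2).
- by rewrite ltrNl; apply: (bound _ (- x1)); rewrite ?opprK ?mulrNN // mulrC.
- by apply: (bound _ x1); rewrite // mulrC.
Qed.

Lemma in_Delta_rho_real_roots r (x1 x2 : R) : 0 < r ->
  in_Delta_rho r (- (x1 + x2)) (x1 * x2) <-> `|x1| <= r /\ `|x2| <= r.
Proof.
move=> r0; rewrite in_Delta_rhoE ?ler_norml; last exact: ltW.
have -> : r ^+ 2 + r * - (x1 + x2) + x1 * x2 = (r - x1) * (r - x2) by ring.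
have -> : r ^+ 2 - r * - (x1 + x2) + x1 * x2 = (r + x1) * (r + x2) by ring.
split; last by case=> /andP[? ?] /andP[? ?]; split; nra.
case=> h1 h2 h3; have bound := @vieta_le_bound r _ _ r0.
split; apply/andP; split.
- by rewrite lerNl; apply: (bound _ (- x2)); rewrite ?opprK ?mulrNN.
- exact: (bound _ x2).
- by rewrite lerNl; apply: (bound _ (- x1)); rewrite ?opprK ?mulrNN // mulrC.
- by apply: (bound _ x1); rewrite // mulrC.
Qed.

Lemma in_Delta_nonreal_roots b a : b ^+ 2 < 4 * a -> in_Delta b a <-> a < 1.
Proof.
move=> disc; rewrite in_DeltaE; split => [[] //|a1].
by split => //; nra.
Qed.

Lemma in_Delta_rho_nonreal_roots r b a : 0 <= r -> b ^+ 2 < 4 * a ->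
  in_Delta_rho r b a <-> a <= r ^+ 2.
Proof.
move=> r0 disc; rewrite in_Delta_rhoE //; split => [[] //|ar].
by split => //; nra.
Qed.

End QuadraticRegions.

Lemma vieta_eq0 (F : idomainType) (b a x1 x2 : F) : b = - (x1 + x2) -> a = x1 * x2 ->
  forall z, (z ^+ 2 + b * z + a == 0) = (z == x1) || (z == x2).
Proof.
move=> -> -> z; have -> : z ^+ 2 + - (x1 + x2) * z + x1 * x2 = (z - x1) * (z - x2) by ring.
by rewrite mulf_eq0 !subr_eq0.
Qed.

Section QuadraticRootsC.
Variable R : rcfType.
Implicit Types (a b r : R).
Local Open Scope complex_scope.

Definition quadC b a (z : R[i]) : R[i] := z ^+ 2 + b%:C * z + a%:C.

Lemma real_vieta b a : 4 * a <= b ^+ 2 -> exists x1 x2, b = - (x1 + x2) /\ a = x1 * x2.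
Proof.
move=> disc; set s := Num.sqrt (b ^+ 2 - 4 * a).
have s2 : s ^+ 2 = b ^+ 2 - 4 * a by rewrite sqr_sqrtr // subr_ge0.
exists ((- b + s) / 2), ((- b - s) / 2); split; first by field.
have -> : (- b + s) / 2 * ((- b - s) / 2) = (b ^+ 2 - s ^+ 2) / 4 by field.
by rewrite s2; field.
Qed.

Lemma nonreal_vieta b a : b ^+ 2 < 4 * a ->
  exists w : R[i], b%:C = - (w + w^*) /\ a%:C = w * w^*.
Proof.
move=> disc; set s := Num.sqrt (4 * a - b ^+ 2).
have s2 : s ^+ 2 = 4 * a - b ^+ 2 by rewrite sqr_sqrtr // subr_ge0 ltW.
have ea : a = (b ^+ 2 + s ^+ 2) / 4 by rewrite s2; field.
exists ((- b / 2) +i* (s / 2)).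
by split; apply/eqP; rewrite eq_complex /=; apply/andP; split; apply/eqP; rewrite ?ea; field.
Qed.

Lemma normc_real (x : R) : `|x%:C| = `|x|%:C.
Proof. by rewrite normc_def /= [0 ^+ 2]expr2 mul0r addr0 sqrtr_sqr. Qed.

Lemma normc_ltr (z : R[i]) r : 0 <= r -> (`|z| < r%:C) = (`|z| ^+ 2 < (r ^+ 2)%:C).
Proof. by move=> r0; rewrite rmorphXn ltr_sqr ?nnegrE ?normr_ge0 ?ler0c. Qed.

Lemma normc_ler (z : R[i]) r : 0 <= r -> (`|z| <= r%:C) = (`|z| ^+ 2 <= (r ^+ 2)%:C).
Proof. by move=> r0; rewrite rmorphXn ler_sqr ?nnegrE ?normr_ge0 ?ler0c. Qed.

Lemma quadC_real_roots b a : 4 * a <= b ^+ 2 -> exists x1 x2,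
  [/\ b = - (x1 + x2), a = x1 * x2 & forall z, quadC b a z = 0 <-> z = x1%:C \/ z = x2%:C].
Proof.
move=> /real_vieta [x1 [x2 [eb ea]]]; exists x1, x2; split => // z.
rewrite (rwP eqP) (@vieta_eq0 _ _ _ x1%:C x2%:C _ _ z).
- by split => [/orP[]/eqP|[]->]; [left|right|rewrite eqxx|rewrite eqxx orbT].
- by rewrite eb rmorphN rmorphD.
- by rewrite ea rmorphM.
Qed.

Lemma quadC_nonreal_roots b a : b ^+ 2 < 4 * a -> exists w : R[i],
  `|w| ^+ 2 = a%:C /\ forall z, quadC b a z = 0 <-> z = w \/ z = w^*.
Proof.
move=> /nonreal_vieta [w [eb ea]]; exists w; split => [|z]; first by rewrite sqr_normc.
rewrite (rwP eqP) (vieta_eq0 eb ea).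
by split => [/orP[]/eqP|[]->]; [left|right|rewrite eqxx|rewrite eqxx orbT].
Qed.

Lemma quadC_roots_lt1 b a :
  (forall z, quadC b a z = 0 -> `|z| < 1%:C) <-> in_Delta b a.
Proof.
have [disc|disc] := lerP (4 * a) (b ^+ 2).
  have [x1 [x2 [eb ea rootsE]]] := quadC_real_roots disc.
  have -> : in_Delta b a <-> `|x1| < 1 /\ `|x2| < 1 by rewrite eb ea; exact: in_Delta_real_roots.
  rewrite -!ltcR -!normc_real.
  by split => [H|[h1 h2] z /rootsE[]->//]; split; apply: H; apply/rootsE; [left|right].
have [w [normw rootsE]] := quadC_nonreal_roots disc.
have normw1 : (`|w| < 1%:C) = (a < 1) by rewrite normc_ltr // normw expr1n ltcR.
rewrite in_Delta_nonreal_roots // -normw1.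
by split => [H|hw z /rootsE[]->//]; [apply: H; apply/rootsE; left | rewrite normcJ].
Qed.

Lemma quadC_roots_le b a r : 0 < r ->
  (forall z, quadC b a z = 0 -> `|z| <= r%:C) <-> in_Delta_rho r b a.
Proof.
move=> r0; have [disc|disc] := lerP (4 * a) (b ^+ 2).
  have [x1 [x2 [eb ea rootsE]]] := quadC_real_roots disc.
  have -> : in_Delta_rho r b a <-> `|x1| <= r /\ `|x2| <= r.
    by rewrite eb ea; exact: in_Delta_rho_real_roots.
  rewrite -!lecR -!normc_real.
  by split => [H|[h1 h2] z /rootsE[]->//]; split; apply: H; apply/rootsE; [left|right].
have [w [normw rootsE]] := quadC_nonreal_roots disc.
have normwr : (`|w| <= r%:C) = (a <= r ^+ 2) by rewrite normc_ler ?normw ?lecR // ltW.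
rewrite in_Delta_rho_nonreal_roots ?(ltW r0) // -normwr.
by split => [H|hw z /rootsE[]->//]; [apply: H; apply/rootsE; left | rewrite normcJ].
Qed.

End QuadraticRootsC.

Section RealSymmetric.
Variables (R : rcfType) (n : nat).
Local Open Scope complex_scope.
Local Notation toC := (real_complex R).

Lemma real_sym_eigenvalueC (Q : 'M[R]_n) (mu : R[i]) : Q^T = Q ->
  eigenvalue (map_mx toC Q) mu -> exists2 lam, eigenvalue Q lam & mu = lam%:C.
Proof.
move=> symQ /[dup] muQ /eigenvalueP[y yQ y0].
set Qc := map_mx toC Q in yQ muQ.
have adjQc : map_mx Num.conj Qc^T = Qc.
  by apply/matrixP => i j; rewrite !mxE -[in RHS]symQ mxE conj_Creal // complex_real.
have adj_mul (u : 'rV[R[i]]_n) : map_mx Num.conj (u *m Qc)^T = Qc *m map_mx Num.conj u^T.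
  by rewrite trmx_mul map_mxM adjQc.
have normy := dotmx_is_dotmx y0; rewrite dotmxE in normy.
(* mu <y, y> = <y Q, y> = <y, y Q> = mu^* <y, y> *)
have : mu *: (y *m map_mx Num.conj y^T) = mu^*%R *: (y *m map_mx Num.conj y^T).
  by rewrite scalemxAl -yQ -mulmxA -adj_mul yQ linearZ /= map_mxZ scalemxAr.
move/matrixP/(_ 0 0); rewrite [LHS]mxE [RHS]mxE => /(mulIf (lt0r_neq0 normy)).
move=> /esym/CrealP/complex_realP[lam muE]; exists lam => //.
by rewrite -(eigenvalue_map toC); move: muQ; rewrite muE.
Qed.

End RealSymmetric.

Section MomentumSpectrum.
Variables (R : rcfType) (n : nat) (alpha beta gamma : R).
Local Open Scope complex_scope.
Local Notation toC := (real_complex R).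
Local Notation a := (a_fun alpha beta gamma).
Local Notation b := (b_fun alpha beta gamma).

Definition mom_s (z : R[i]) : R[i] := z ^+ 2 - (1 + beta)%:C * z + beta%:C.
Definition mom_t (z : R[i]) : R[i] := alpha%:C * ((1 + gamma)%:C * z - gamma%:C).

Lemma quadC_mom lam z : quadC (b lam) (a lam) z = mom_s z + lam%:C * mom_t z.
Proof. by rewrite /quadC /mom_s /mom_t /a_fun /b_fun !(rmorphB, rmorphD, rmorphM, rmorph1); ring. Qed.

Lemma row_mul_momA (Q : 'M[R]_n) (x y : 'rV[R[i]]_n) :
  row_mx x y *m map_mx toC (momA alpha beta gamma Q) =
  row_mx (- beta%:C *: y + (gamma * alpha)%:C *: (y *m map_mx toC Q))
         (x + (1 + beta)%:C *: y - ((1 + gamma) * alpha)%:C *: (y *m map_mx toC Q)).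
Proof.
rewrite /momA map_block_mx map_mx0 map_mx1 !map_mxD !map_mxN !map_mxZ !map_scalar_mx.
rewrite mul_row_block mulmx0 add0r mulmx1 !mulmxDr !mulmxN !mul_mx_scalar -!scalemxAr.
by rewrite scaleNr addrA.
Qed.

(* [s y + t q] as a combination of the two block residuals of
   [row_mx x y *m A - z *: row_mx x y], where [q] stands for [y *m Q]. *)
Lemma mom_st_residuals z (x y q : 'rV[R[i]]_n) :
  mom_s z *: y + mom_t z *: q =
  z *: (z *: y - (x + (1 + beta)%:C *: y - ((1 + gamma) * alpha)%:C *: q)) +
  (z *: x - (- beta%:C *: y + (gamma * alpha)%:C *: q)).
Proof.
apply/rowP => j; rewrite !mxE /mom_s /mom_t.
by rewrite !(rmorphM, rmorphD, rmorphN, rmorph1); ring.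
Qed.

Lemma eigvalC_momAP (Q : 'M[R]_n) z : eigvalC (momA alpha beta gamma Q) z <->
  exists2 y : 'rV[R[i]]_n, y != 0 & mom_s z *: y + mom_t z *: (y *m map_mx toC Q) = 0.
Proof.
rewrite /eigvalC -eigenvalue_root_char; split.
  case/eigenvalueP => w; rewrite -[w]hsubmxK row_mul_momA scale_row_mx.
  set x := lsubmx w; set y := rsubmx w; set yQ := y *m _.
  case/eq_row_mx => Ex Ey w0; exists y; last first.
    by rewrite (mom_st_residuals z x) Ex Ey !subrr scaler0 addr0.
  apply: contraNneq w0 => y0; move: Ey; rewrite /yQ y0 mul0mx !scaler0 addr0 subr0 => ->.
  by rewrite row_mx0.
case=> y y0; set yQ := y *m _.
set x := z *: y - (1 + beta)%:C *: y + ((1 + gamma) * alpha)%:C *: yQ.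
have Ey : x + (1 + beta)%:C *: y - ((1 + gamma) * alpha)%:C *: yQ = z *: y.
  by apply/rowP => j; rewrite !mxE; ring.
rewrite (mom_st_residuals z x) Ey subrr scaler0 add0r => /eqP; rewrite subr_eq0 => /eqP Ex.
apply/eigenvalueP; exists (row_mx x y); last by rewrite row_mx_eq0 negb_and y0 orbT.
by rewrite row_mul_momA scale_row_mx Ex Ey.
Qed.

Lemma eigvalC_momA_quadC (Q : 'M[R]_n) z : Q^T = Q ->
  eigvalC (momA alpha beta gamma Q) z <->
  exists2 lam, eigenvalue Q lam & quadC (b lam) (a lam) z = 0.
Proof.
move=> symQ; rewrite eigvalC_momAP; split; last first.
  case=> lam /eigenvalueP[v vQ v0] hz; exists (map_mx toC v); first by rewrite map_mx_eq0.
  by rewrite -map_mxM vQ map_mxZ scalerA -scalerDl [_ * lam%:C]mulrC -quadC_mom hz scale0r.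
case=> y y0 hy.
have [mu muQ smu] : exists2 mu, eigenvalue (map_mx toC Q) mu & mom_s z + mu * mom_t z = 0.
  have [t0|t0] := eqVneq (mom_t z) 0.
    have n0 : (0 < n)%N by move: y y0 {hy}; case: n => // y; rewrite thinmx0 eqxx.
    have [mu muQ] := eigenvalue_closed (map_mx toC Q) n0.
    exists mu => //; move/eqP: hy; rewrite t0 scale0r addr0 scaler_eq0 (negPf y0) orbF.
    by move/eqP->; rewrite mulr0 addr0.
  exists (- mom_s z / mom_t z); last by rewrite divfK // addrN.
  apply/eigenvalueP; exists y => //; apply: (scalerI t0).
  by rewrite scalerA mulrC divfK // scaleNr; apply/eqP; rewrite -subr_eq0 opprK addrC hy.
have [lam lamQ muE] := real_sym_eigenvalueC symQ muQ.
by exists lam; rewrite // quadC_mom -muE.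
Qed.

End MomentumSpectrum.

Section DiagonalWitness.
Variables (R : rcfType) (n : nat).

Lemma row_neq0P (v : 'rV[R]_n) : v != 0 -> exists j, v 0 j != 0.
Proof.
move=> v0; apply/existsP; apply: contraR v0 => /existsPn v0.
by apply/eqP/rowP => j; rewrite mxE; apply/eqP; rewrite -[_ == _]negbK v0.
Qed.

Lemma eigenvalue_diag_mx (d : 'rV[R]_n) lam : eigenvalue (diag_mx d) lam <-> exists j, lam = d 0 j.
Proof.
split.
  case/eigenvalueP => v vd /row_neq0P[j vj]; exists j.
  move/rowP/(_ j): vd; rewrite mul_mx_diag !mxE mulrC => /(mulIf vj).
  by move->.
case=> j ->; apply/eigenvalueP; exists (delta_mx 0 j).
  apply/rowP => k; rewrite mul_mx_diag !mxE.
  by have [->|_] := eqVneq k j; rewrite ?andbT ?andbF ?mul0r ?mulr0 ?mulr1 ?mul1r.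
by apply/eqP => /rowP/(_ j); rewrite !mxE !eqxx => /eqP; rewrite oner_eq0.
Qed.

Lemma diag_mx_pos_def (d : 'rV[R]_n) : (forall j, 0 < d 0 j) ->
  forall x : 'rV[R]_n, x != 0 -> 0 < (x *m diag_mx d *m x^T) 0 0.
Proof.
move=> d_gt0 x /row_neq0P[j xj].
have termE k : (x *m diag_mx d) 0 k * x^T k 0 = d 0 k * x 0 k ^+ 2.
  by rewrite mul_mx_diag !mxE; ring.
rewrite mxE (bigD1 j) //= termE; apply: ltr_pwDl.
  by rewrite mulr_gt0 // exprn_even_gt0.
by apply: sumr_ge0 => k _; rewrite termE mulr_ge0 ?sqr_ge0 // ltW.
Qed.

Lemma exists_in_QmL (m L : R) : 0 < m -> m <= L ->
  (1 < n)%N \/ (0 < n)%N /\ m = L -> exists Q : 'M[R]_n, in_QmL m L Q.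
Proof.
move=> m0 mL hn; have n0 : (0 < n)%N by case: hn => [/ltnW|[]].
pose d : 'rV[R]_n := \row_i (if i == 0 :> nat then m else L).
exists (diag_mx d); split.
- exact: tr_diag_mx.
- by apply: diag_mx_pos_def => j; rewrite mxE; case: ifP => _; lra.
- by apply/eigenvalue_diag_mx; exists (@Ordinal n 0 n0); rewrite mxE.
- apply/eigenvalue_diag_mx; case: hn => [n1|[_ <-]].
    by exists (@Ordinal n 1 n1); rewrite mxE.
  by exists (@Ordinal n 0 n0); rewrite /d mxE.
- by move=> lam /eigenvalue_diag_mx[j ->]; rewrite mxE; case: ifP => _; rewrite lexx ?mL.
Qed.

End DiagonalWitness.

Section Segments.
Variable R : rcfType.
Implicit Types (m L l c d : R).

Lemma affine_gt0_segment m L l c d : m <= l <= L ->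
  0 < c + d * m -> 0 < c + d * L -> 0 < c + d * l.
Proof. by case/andP => ml lL hm hL; have [d0|d0] := lerP 0 d; nra. Qed.

Lemma affine_ge0_segment m L l c d : m <= l <= L ->
  0 <= c + d * m -> 0 <= c + d * L -> 0 <= c + d * l.
Proof. by case/andP => ml lL hm hL; have [d0|d0] := lerP 0 d; nra. Qed.

Lemma segment_endpointsP (P : R -> Prop) m L : m <= L ->
  (P m -> P L -> forall l, m <= l <= L -> P l) ->
  (forall l, m <= l <= L -> P l) <-> P m /\ P L.
Proof.
move=> mL Pseg; split => [H|[]]; last exact: Pseg.
by split; apply: H; rewrite lexx ?mL.
Qed.

Variables (A B : R -> R) (a0 a1 b0 b1 : R).
Hypotheses (A_affine : forall l, A l = a0 + a1 * l) (B_affine : forall l, B l = b0 + b1 * l).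

Lemma in_Delta_segment m L : in_Delta (B m) (A m) -> in_Delta (B L) (A L) ->
  forall l, m <= l <= L -> in_Delta (B l) (A l).
Proof.
move=> + + l ml; rewrite !in_DeltaE !A_affine !B_affine => -[m1 m2 m3] [L1 L2 L3].
split.
- by have := @affine_gt0_segment m L l (1 + b0 + a0) (b1 + a1) ml; lra.
- by have := @affine_gt0_segment m L l (1 - b0 + a0) (a1 - b1) ml; lra.
- by have := @affine_gt0_segment m L l (1 - a0) (- a1) ml; lra.
Qed.

Lemma in_Delta_rho_segment rho m L : 0 <= rho ->
  in_Delta_rho rho (B m) (A m) -> in_Delta_rho rho (B L) (A L) ->
  forall l, m <= l <= L -> in_Delta_rho rho (B l) (A l).
Proof.
move=> rho0 + + l ml; rewrite !in_Delta_rhoE // !A_affine !B_affine => -[m1 m2 m3] [L1 L2 L3].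
split.
- by have := @affine_ge0_segment m L l (rho ^+ 2 + rho * b0 + a0) (rho * b1 + a1) ml; nra.
- by have := @affine_ge0_segment m L l (rho ^+ 2 - rho * b0 + a0) (a1 - rho * b1) ml; nra.
- by have := @affine_ge0_segment m L l (rho ^+ 2 - a0) (- a1) ml; lra.
Qed.

End Segments.

Section SpectralConditions.
Variables (R : rcfType) (n : nat) (m L : R).
Hypotheses (m_gt0 : 0 < m) (m_le_L : m <= L) (n_big : (1 < n)%N \/ (0 < n)%N /\ m = L).

Lemma QmL_spectrum_condP (P : R -> Prop) :
  (P m -> P L -> forall l, m <= l <= L -> P l) ->
  (forall Q : 'M[R]_n, in_QmL m L Q -> forall lam, eigenvalue Q lam -> P lam) <->
  (forall l, m <= l <= L -> P l).
Proof.
move=> Pseg; split => [H|H Q [_ _ _ _ QmL] lam /QmL]; last exact: H.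
have [Q QQ] := exists_in_QmL m_gt0 m_le_L n_big; case: (QQ) => _ _ Qm QL _.
by apply: Pseg; [apply: (H Q QQ) _ Qm | apply: (H Q QQ) _ QL].
Qed.

Variables (alpha beta gamma : R).
Local Notation a := (a_fun alpha beta gamma).
Local Notation b := (b_fun alpha beta gamma).

Lemma stable_allE : stable_all n m L alpha beta gamma <->
  forall Q : 'M[R]_n, in_QmL m L Q -> forall lam, eigenvalue Q lam -> in_Delta (b lam) (a lam).
Proof.
split=> H Q QQ; case: (QQ) => symQ _ _ _ _.
  move=> lam lamQ; apply/quadC_roots_lt1 => z hz.
  by apply: (H Q QQ); apply/eigvalC_momA_quadC => //; exists lam.
move=> z /eigvalC_momA_quadC[// | lam lamQ].
by have /quadC_roots_lt1 := H Q QQ lam lamQ; apply.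
Qed.

Lemma rate_allE rho : 0 < rho -> rate_all n m L alpha beta gamma rho <->
  forall Q : 'M[R]_n, in_QmL m L Q -> forall lam, eigenvalue Q lam -> in_Delta_rho rho (b lam) (a lam).
Proof.
move=> rho0; split=> H Q QQ; case: (QQ) => symQ _ _ _ _.
  move=> lam lamQ; apply/(quadC_roots_le _ _ rho0) => z hz.
  by apply: (H Q QQ); apply/eigvalC_momA_quadC => //; exists lam.
move=> z /eigvalC_momA_quadC[// | lam lamQ].
by have /(quadC_roots_le _ _ rho0) := H Q QQ lam lamQ; apply.
Qed.

End SpectralConditions.

Theorem lemma3 (R : rcfType) (n : nat) (m L alpha beta gamma : R)
  (hm : 0 < m) (hmL : m <= L) (hn : (1 < n)%N \/ ((0 < n)%N /\ m = L)) :
  let a := a_fun alpha beta gamma in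
  let b := b_fun alpha beta gamma in
  [/\ stable_all n m L alpha beta gamma <->
        (forall lam, m <= lam <= L -> in_Delta (b lam) (a lam)),
      (forall lam, m <= lam <= L -> in_Delta (b lam) (a lam)) <->
        (in_Delta (b m) (a m) /\ in_Delta (b L) (a L)) &
      forall rho : R, 0 < rho < 1 ->
        (rate_all n m L alpha beta gamma rho <->
           (forall lam, m <= lam <= L -> in_Delta_rho rho (b lam) (a lam))) /\
        ((forall lam, m <= lam <= L -> in_Delta_rho rho (b lam) (a lam)) <->
           (in_Delta_rho rho (b m) (a m) /\ in_Delta_rho rho (b L) (a L)))].
Proof.
move=> a b.
have a_affine l : a l = beta + - (gamma * alpha) * l by rewrite /a /a_fun; ring.
have b_affine l : b l = - (1 + beta) + (1 + gamma) * alpha * l by rewrite /b /b_fun; ring.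
have Delta_seg := in_Delta_segment a_affine b_affine (m := m) (L := L).
split.
- by rewrite stable_allE //; apply: QmL_spectrum_condP.
- exact: segment_endpointsP.
move=> rho /andP[rho0 _].
have Delta_rho_seg := in_Delta_rho_segment a_affine b_affine (ltW rho0) (m := m) (L := L).
split; last exact: segment_endpointsP.
by rewrite rate_allE //; apply: QmL_spectrum_condP.
Qed.
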